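(* Let $\mathcal{G}$ be a connected graph on which the SBCM is run, and suppose its node set can be partitioned into sets $I$ and $J$ such that (1) $J\subseteq\mathcal{P}$ (i.e., $J$ contains no zealots), and (2) there is a single node $i\in I$ such that every path from any node $j\in J$ to a zealot traverses $i$. Then at any steady state $\mathbf{x}$ of the SBCM, $x_j=x_i$ for all $j\in J$.
   Context: Let $\mathcal{G}$ be a finite undirected unweighted graph without self-loops, with node set $\mathcal{N}$, adjacency $i\sim j$, partitioned into zealots $\mathcal{Z}$ and persuadable nodes $\mathcal{P}=\mathcal{N}\setminus\mathcal{Z}$. For $\gamma,\delta\ge0$, $w(x_i,x_j)=\frac{1}{1+e^{\gamma(x_i-x_j)^2-\gamma\delta}}$ if $i\sim j$ and $0$ otherwise. The SBCM is $\frac{dx_i}{dt}=f_i(\mathbf{x})=\frac{\sum_j w(x_i,x_j)(x_j-x_i)}{\sum_j w(x_i,x_j)}$ for $i\in\mathcal{P}$ and $\frac{dx_i}{dt}=0$ for $i\in\mathcal{Z}$. A steady state is $\mathbf{x}$ with $f_i(\mathbf{x})=0$ for all $i$. *)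

From mathcomp Require Import all_boot all_order all_algebra.
From mathcomp Require Import reals.
From mathcomp Require Import sequences exp.
Set Implicit Arguments. Unset Strict Implicit. Unset Printing Implicit Defensive.
Import Order.TTheory GRing.Theory Num.Theory.
Local Open Scope ring_scope.

Definition simple_graph (T : finType) (e : rel T) : Prop :=
  symmetric e /\ irreflexive e.

Definition connected_graph (T : finType) (e : rel T) : Prop :=
  forall u v : T, connect e u v.

Definition sbcm_w (R : realType) (T : finType) (e : rel T) (gamma delta : R)
    (x : T -> R) (i j : T) : R :=
  if e i j then 1 / (1 + expR (gamma * (x i - x j) ^+ 2 - gamma * delta)) else 0.

(* Right-hand side f_i of the SBCM; zealots (nodes in Z) have derivative 0. *)
Definition sbcm_f (R : realType) (T : finType) (e : rel T) (Z : {set T})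
    (gamma delta : R) (x : T -> R) (i : T) : R :=
  if i \in Z then 0
  else (\sum_j sbcm_w e gamma delta x i j * (x j - x i))
       / (\sum_j sbcm_w e gamma delta x i j).

Definition sbcm_steady_state (R : realType) (T : finType) (e : rel T)
    (Z : {set T}) (gamma delta : R) (x : T -> R) : Prop :=
  forall i : T, sbcm_f e Z gamma delta x i = 0.

From mathcomp Require Import all_boot all_order all_algebra.
From mathcomp Require Import reals.
From mathcomp Require Import sequences exp.
Set Implicit Arguments. Unset Strict Implicit. Unset Printing Implicit Defensive.
Import Order.TTheory GRing.Theory Num.Theory.
Local Open Scope ring_scope.

(* Let C be the set of nodes reachable from J by paths that never enter i.
   By the separation hypothesis C contains no zealot, so at a steady state
   every node of C is a weighted average of its neighbours with positive
   weights, i.e. x is harmonic on C; and the only neighbour of C outside C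
   is i.  The discrete maximum principle then bounds x on C above and below
   by x_i.  The weights are positive for every gamma and delta. *)

Section HarmonicFunctions.

Variables (R : realDomainType) (T : finType) (e : rel T) (w : T -> T -> R).
Hypothesis w_gt0 : forall c d, e c d -> 0 < w c d.
Hypothesis w_eq0 : forall c d, ~~ e c d -> w c d = 0.

Definition harmonic_at (y : T -> R) (c : T) : Prop :=
  \sum_d w c d * (y d - y c) = 0.

Lemma w_ge0 c d : 0 <= w c d.
Proof. by case: (boolP (e c d)) => [/w_gt0/ltW | /w_eq0->]. Qed.

Lemma harmonic_atN y c : harmonic_at (fun t => - y t) c <-> harmonic_at y c.
Proof.
rewrite /harmonic_at; under eq_bigr => d _ do rewrite -opprD mulrN.
by rewrite sumrN; split=> [/eqP | ->]; rewrite ?oppr_eq0 ?oppr0 // => /eqP.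
Qed.

Lemma harmonic_at_local_max y c :
  harmonic_at y c -> (forall d, e c d -> y d <= y c) ->
  forall d, e c d -> y d = y c.
Proof.
move=> harm_c max_c d ecd.
have term_ge0 d' : 0 <= w c d' * (y c - y d').
  case: (boolP (e c d')) => [ecd' | /w_eq0->]; last by rewrite mul0r.
  by rewrite mulr_ge0 ?w_ge0 ?subr_ge0 ?max_c.
have sum_eq0 : \sum_d' w c d' * (y c - y d') = 0.
  by under eq_bigr => d' _ do rewrite -opprB mulrN; rewrite sumrN harm_c oppr0.
have /eqP := psumr_eq0P (fun d' _ => term_ge0 d') sum_eq0 (i := d) isT.
by rewrite mulf_eq0 (gt_eqF (w_gt0 ecd)) subr_eq0 => /eqP.
Qed.

Hypotheses (e_sym : symmetric e) (e_connected : connected_graph e).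

Lemma harmonic_max_principle (C : {set T}) (i : T) (y : T -> R) :
  i \notin C -> (forall c d, c \in C -> e c d -> d != i -> d \in C) ->
  {in C, forall c, harmonic_at y c} -> {in C, forall c, y c <= y i}.
Proof.
move=> iNC C_closed harm_C c0 c0C; rewrite leNgt; apply/negP => lt_i_c0.
case: (arg_maxP y c0C) => cm cmC cm_max.
pose m := y cm.
have lt_im : y i < m by apply: lt_le_trans lt_i_c0 (cm_max _ c0C).
pose M := [set c in C | y c == m].
have M_closed c d : e c d -> c \in M -> d \in M.
  move=> ecd; rewrite inE => /andP[cC /eqP ycm].
  have nbr_le d' : e c d' -> y d' <= y c.
    move=> ecd'; rewrite ycm; have [->|d'Ni] := eqVneq d' i; first exact: ltW.
    exact/cm_max/(C_closed c).
  have ydm : y d = m by rewrite -ycm (harmonic_at_local_max (harm_C c cC) nbr_le ecd).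
  have dNi : d != i by apply: contraTneq lt_im => <-; rewrite ydm ltxx.
  by rewrite inE (C_closed c d) //= ydm.
have := closed_connect (intro_closed (sym_connect_sym e_sym) M_closed) (e_connected cm i).
by rewrite !inE (negbTE iNC) (cmC : cm \in C) eqxx.
Qed.

Lemma harmonic_eq_boundary (C : {set T}) (i : T) (y : T -> R) :
  i \notin C -> (forall c d, c \in C -> e c d -> d != i -> d \in C) ->
  {in C, forall c, harmonic_at y c} -> {in C, forall c, y c = y i}.
Proof.
move=> iNC C_closed harm_C c cC; apply/eqP; rewrite eq_le.
rewrite (harmonic_max_principle iNC C_closed harm_C cC) -lerN2 /=.
apply: (harmonic_max_principle (y := fun t => - y t)) iNC C_closed _ c cC.
by move=> c' c'C; apply/harmonic_atN/harm_C.
Qed.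

End HarmonicFunctions.

Lemma weighted_mean_eq0 (R : numFieldType) (I : finType) (a b : I -> R) :
  (forall k, 0 <= a k) -> (\sum_k a k * b k) / (\sum_k a k) = 0 ->
  \sum_k a k * b k = 0.
Proof.
move=> a_ge0 /eqP; rewrite mulf_eq0 invr_eq0 => /orP[/eqP // | /eqP sum_a0].
by apply: big1 => k _; rewrite (psumr_eq0P (fun k _ => a_ge0 k) sum_a0) ?mul0r.
Qed.

Section SBCMWeights.

Variables (R : realType) (T : finType) (e : rel T) (gamma delta : R) (x : T -> R).

Lemma sbcm_w_gt0 c d : e c d -> 0 < sbcm_w e gamma delta x c d.
Proof. by move=> ecd; rewrite /sbcm_w ecd div1r invr_gt0 addr_gt0 ?expR_gt0. Qed.

Lemma sbcm_w_eq0 c d : ~~ e c d -> sbcm_w e gamma delta x c d = 0.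
Proof. by rewrite /sbcm_w => /negbTE->. Qed.

Lemma sbcm_steady_harmonic (Z : {set T}) c :
  sbcm_steady_state e Z gamma delta x -> c \notin Z ->
  harmonic_at (sbcm_w e gamma delta x) x c.
Proof.
move=> steady cNZ; apply: weighted_mean_eq0 => [d|].
  exact: w_ge0 sbcm_w_gt0 sbcm_w_eq0 c d.
by have := steady c; rewrite /sbcm_f (negbTE cNZ).
Qed.

End SBCMWeights.

Section ReachAvoiding.

Variables (T : finType) (e : rel T) (i : T).

Definition avoid_rel : rel T := [rel a b | e a b && (b != i)].

Definition reach_avoid (A : {set T}) : {set T} :=
  [set c | (c != i) && [exists a in A, connect avoid_rel a c]].

Lemma path_avoid_notin u p : path avoid_rel u p -> i \notin p.
Proof.
elim: p u => //= d p IHp u /andP[/andP[_ dNi] pd].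
by rewrite inE negb_or eq_sym dNi (IHp d pd).
Qed.

Lemma notin_reach_avoid (A : {set T}) : i \notin reach_avoid A.
Proof. by rewrite inE eqxx. Qed.

Lemma sub_reach_avoid (A : {set T}) : i \notin A -> {subset A <= reach_avoid A}.
Proof.
move=> iNA a aA; rewrite inE; apply/andP; split.
  by apply: contraNneq iNA => <-.
by apply/existsP; exists a; rewrite aA connect0.
Qed.

Lemma reach_avoid_closed (A : {set T}) c d :
  c \in reach_avoid A -> e c d -> d != i -> d \in reach_avoid A.
Proof.
rewrite !inE => /andP[_ /existsP[a /andP[aA reach_c]]] ecd dNi.
rewrite dNi; apply/existsP; exists a; rewrite aA.
by apply: connect_trans reach_c (connect1 _); rewrite /avoid_rel /= ecd.
Qed.

Lemma reach_avoid_notin (A Z : {set T}) :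
  i \notin A ->
  (forall a p, a \in A -> path e a p -> last a p \in Z -> i \in a :: p) ->
  forall c, c \in reach_avoid A -> c \notin Z.
Proof.
move=> iNA separates c.
rewrite inE => /andP[_ /existsP[a /andP[aA /connectP[p p_avoid ->]]]].
apply/negP => lastZ.
have p_e : path e a p by apply: sub_path p_avoid => u v /andP[].
move: (separates a p aA p_e lastZ).
rewrite inE (negbTE (path_avoid_notin p_avoid)) orbF => /eqP ia.
by rewrite ia aA in iNA.
Qed.

End ReachAvoiding.

Theorem theorem4 (R : realType) (T : finType) (e : rel T) (Z : {set T})
    (gamma delta : R) (I J : {set T}) (i : T) (x : T -> R) :
  simple_graph e ->
  connected_graph e ->
  0 <= gamma -> 0 <= delta ->
  I :&: J = set0 -> I :|: J = setT ->
  J \subset ~: Z ->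
  i \in I ->
  (forall (j : T) (p : seq T),
      j \in J -> path e j p -> last j p \in Z -> i \in j :: p) ->
  sbcm_steady_state e Z gamma delta x ->
  forall j, j \in J -> x j = x i.
Proof.
move=> [e_sym _] e_conn _ _ IJ0 _ _ iI separates steady j jJ.
have iNJ : i \notin J.
  apply/negP => iJ; have : i \in I :&: J by rewrite inE iI iJ.
  by rewrite IJ0 inE.
have harm_C : {in reach_avoid e i J, forall c, harmonic_at (sbcm_w e gamma delta x) x c}.
  by move=> c cC; apply: sbcm_steady_harmonic steady (reach_avoid_notin iNJ separates cC).
have := harmonic_eq_boundary (sbcm_w_gt0 gamma delta x) (sbcm_w_eq0 gamma delta x)
  e_sym e_conn (notin_reach_avoid e i J) (@reach_avoid_closed _ e i J) harm_C.
by apply; apply: sub_reach_avoid.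
Qed.
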